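(* Let $G$ be a periodic group such that the set of primes dividing the orders of elements of $G$ is exactly $\{2,3\}$, for any two elements $g,h\in G$ of orders at most $4$ the order of $gh$ is at most $9$, and the centralizer of every involution of $G$ is a locally cyclic $2$-group. Fix an element $t\in G$ of order $4$, and let $\Theta=\{g^{-1}tg\mid g\in G\}$ and $\Theta^{-}=\{u^{-1}\mid u\in\Theta\}$. Then $\Theta\cap\Theta^{-}=\emptyset$ and $\Theta\cup\Theta^{-}=\Gamma_4(G)$.
   Context: $\Gamma_4(G)$ denotes the set of elements of $G$ of order exactly $4$. *)

From Stdlib Require List.
From mathcomp Require Import all_boot all_algebra.
Set Implicit Arguments. Unset Strict Implicit. Unset Printing Implicit Defensive.

Section Grp.
Variables (G : Type) (mul : G -> G -> G) (one : G) (inv : G -> G).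

Definition is_group : Prop :=
  [/\ forall x y z, mul x (mul y z) = mul (mul x y) z,
      forall x, mul one x = x, forall x, mul x one = x,
      forall x, mul (inv x) x = one & forall x, mul x (inv x) = one].

Fixpoint gpow (x : G) (n : nat) : G :=
  match n with 0 => one | n'.+1 => mul x (gpow x n') end.

Definition gzpow (x : G) (z : int) : G :=
  match z with Posz n => gpow x n | Negz n => inv (gpow x n.+1) end.

Definition order_is (x : G) (n : nat) : Prop :=
  0 < n /\ gpow x n = one /\ forall m, 0 < m < n -> gpow x m <> one.

Definition periodic : Prop := forall x, exists n, order_is x n.

Inductive gen (S : G -> Prop) : G -> Prop :=
| gen_one : gen S one
| gen_in x : S x -> gen S x
| gen_mul x y : gen S x -> gen S y -> gen S (mul x y)
| gen_inv x : gen S x -> gen S (inv x).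

Definition cyclic_set (H : G -> Prop) : Prop :=
  exists c, H c /\ forall x, H x <-> exists z : int, x = gzpow c z.

Definition locally_cyclic (H : G -> Prop) : Prop :=
  forall l : list G, (forall x, List.In x l -> H x) ->
    cyclic_set (gen (fun x => List.In x l)).

Definition two_group (H : G -> Prop) : Prop :=
  forall x, H x -> exists k, order_is x (2 ^ k).

Definition centralizer (i : G) : G -> Prop := fun x => mul x i = mul i x.

Definition conj_class (t : G) : G -> Prop :=
  fun x => exists g, x = mul (mul (inv g) t) g.
Definition inv_set (S : G -> Prop) : G -> Prop :=
  fun x => exists u, S u /\ x = inv u.

End Grp.

From HB Require Import structures.
From mathcomp Require Import all_boot all_algebra.
From mathcomp Require Import boolp.
Set Implicit Arguments. Unset Strict Implicit. Unset Printing Implicit Defensive.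

(* Let i = t^2.  Its centralizer is locally cyclic, hence abelian with i as its
   only involution.  An element conjugating t to t^-1 centralizes i, hence
   commutes with t, which forces t = t^-1: so Theta and Theta^- are disjoint.
   Conversely, if x has order 4, the involutions i and x^2 have a product of
   finite order, hence are conjugate (dihedral argument), so some conjugate y of
   x satisfies y^2 = i.  Then y t^-1 lies in the centralizer of i and squares
   to 1, so it is 1 or i, i.e. y = t or y = t^-1. *)

Section GroupFacts.
Variable gT : groupType.
Local Open Scope group_scope.
Implicit Types (x y a b c : gT) (H : gT -> Prop).
Local Notation ord := (order_is *%g (1 : gT)).
Local Notation gen2 a b := (gen *%g 1 monoid.inv (fun x => List.In x [:: a; b])).
Local Notation locally_cyclic := (locally_cyclic *%g 1 monoid.inv).

Lemma gpowE x n : gpow *%g 1 x n = x ^+ n.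
Proof. by elim: n => //= n ->; rewrite expgS. Qed.

Lemma order_isE x n :
  ord x n <-> [/\ 0 < n, x ^+ n = 1 & forall m, 0 < m < n -> x ^+ m != 1].
Proof.
rewrite /order_is; split=> [[n_gt0 [xn1 x_min]]|[n_gt0 xn1 x_min]].
  split=> [//||m m_lt]; first by rewrite -gpowE.
  by apply/eqP; rewrite -gpowE; apply: x_min.
split=> //; split=> [|m m_lt]; first by rewrite gpowE.
by rewrite gpowE; apply/eqP; apply: x_min.
Qed.

Lemma order_conj x y n : ord x n -> ord (x ^ y) n.
Proof.
rewrite !order_isE => -[n_gt0 xn1 x_min]; split=> [//||m m_lt].
  by rewrite -conjXg xn1 conj1g.
by rewrite -conjXg conjg_eq1 x_min.
Qed.

Lemma order_inv x n : ord x n -> ord x^-1 n.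
Proof.
rewrite !order_isE => -[n_gt0 xn1 x_min]; split=> [//||m m_lt].
  by rewrite expVgn xn1 invg1.
by rewrite expVgn invg_eq1 x_min.
Qed.

Lemma order2P x : ord x 2 <-> x * x = 1 /\ x != 1.
Proof.
rewrite order_isE; split=> [[_ xx1 x_min]|[xx1 x_n1]].
  by split=> //; exact: (x_min 1%N).
by split=> // -[|[|m]].
Qed.

Lemma order4_sqr x : ord x 4 -> ord (x * x) 2.
Proof.
rewrite !order_isE -expg2 -!expgnA => -[_ x41 x_min].
by split=> // -[|[|m]] // _; rewrite x_min.
Qed.

Lemma expg_odd x k : x * x = 1 -> x ^+ k = x ^+ odd k.
Proof.
move=> xx1; rewrite -{1}(odd_double_half k) -mul2n expgnDr expgnA expg2 xx1.
by rewrite expg1n mulg1.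
Qed.

Lemma conj_classP t x : conj_class *%g monoid.inv t x <-> exists g, x = t ^ g.
Proof. by split=> -[g ->]; exists g; rewrite conjgE mulgA. Qed.

Lemma gzpow_commute c z1 z2 :
  commute (gzpow *%g 1 monoid.inv c z1) (gzpow *%g 1 monoid.inv c z2).
Proof.
have cX m n : commute (c ^+ m) (c ^+ n) by apply/commuteX2/commute_refl.
case: z1 z2 => n1 [] n2; rewrite /gzpow !gpowE //.
- exact/commuteV.
- exact/commute_sym/commuteV/commute_sym.
- exact/commuteV/commute_sym/commuteV/commute_sym.
Qed.

Lemma locally_cyclic_commute H a b :
  locally_cyclic H -> H a -> H b -> commute a b.
Proof.
move=> lcH Ha Hb.
have [c [_ genE]] : cyclic_set *%g 1 monoid.inv (gen2 a b).
  by apply: lcH => x /= [<-|[<-|[]]].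
have [z1 ->] := proj1 (genE a) (gen_in _ _ _ (or_introl erefl)).
have [z2 ->] := proj1 (genE b) (gen_in _ _ _ (or_intror (or_introl erefl))).
exact: gzpow_commute.
Qed.

Lemma gen_commuting_involutions a b x : commute a b -> a * a = 1 -> b * b = 1 ->
  gen2 a b x -> exists m n, x = a ^+ m * b ^+ n.
Proof.
move=> ab aa bb.
elim=> [|y /= [<-|[<-|[]]]|y z _ [m [n ->]] _ [m' [n' ->]]|y _ [m [n ->]]].
- by exists 0%N, 0%N; rewrite mulg1.
- by exists 1%N, 0%N; rewrite mulg1.
- by exists 0%N, 1%N; rewrite mul1g.
- exists (m + m')%N, (n + n')%N.
  rewrite !expgnDr -!mulgA (mulgA (b ^+ n)).
  by rewrite (commuteX2 _ _ (commute_sym ab)) !mulgA.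
- exists m, n; rewrite invgM -!expVgn (mulg1_eq aa) (mulg1_eq bb).
  exact/commuteX2/commute_sym.
Qed.

Lemma gzpow_involution c z : c * c = 1 ->
  exists k : bool, gzpow *%g 1 monoid.inv c z = c ^+ k.
Proof.
move=> cc; case: z => n; rewrite /gzpow gpowE; last rewrite -expVgn (mulg1_eq cc).
  by exists (odd n); apply: expg_odd.
by exists (odd n.+1); apply: expg_odd.
Qed.

Lemma locally_cyclic_involution_uniq H a b :
  locally_cyclic H -> H a -> H b -> ord a 2 -> ord b 2 -> a = b.
Proof.
move=> lcH Ha Hb /order2P[aa a_n1] /order2P[bb b_n1].
have ab := locally_cyclic_commute lcH Ha Hb.
have [c [c_gen genE]] : cyclic_set *%g 1 monoid.inv (gen2 a b).
  by apply: lcH => x /= [<-|[<-|[]]].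
have [m [n c_ab]] := gen_commuting_involutions ab aa bb c_gen.
have cc : c * c = 1.
  rewrite -expg2 c_ab expgMn; last exact/commuteX2.
  by rewrite expgnAC (expgnAC b) !expg2 aa bb !expg1n mulg1.
have gen_c x : gen2 a b x -> x != 1 -> x = c.
  by move=> /genE[z ->]; have [[] ->] := gzpow_involution z cc; rewrite ?eqxx.
by rewrite (gen_c a (gen_in _ _ _ (or_introl erefl)) a_n1)
  (gen_c b (gen_in _ _ _ (or_intror (or_introl erefl))) b_n1).
Qed.

End GroupFacts.

Section InvolutionCentralizers.
Variable gT : groupType.
Local Open Scope group_scope.
Implicit Types (x y g i j : gT).
Local Notation ord := (order_is *%g (1 : gT)).
Hypothesis centralizer_lc : forall i, ord i 2 ->
  locally_cyclic *%g 1 monoid.inv (centralizer *%g i).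

Lemma centralizer_involution_commute i a b :
  ord i 2 -> commute a i -> commute b i -> commute a b.
Proof. by move=> /centralizer_lc; apply: locally_cyclic_commute. Qed.

Lemma involution_commute_eq i a : ord i 2 -> ord a 2 -> commute a i -> a = i.
Proof.
by move=> i2 a2 ai; apply: (locally_cyclic_involution_uniq (centralizer_lc i2)).
Qed.

Lemma involutions_conj i j k : ord i 2 -> ord j 2 -> ord (i * j) k ->
  exists g, i ^ g = j.
Proof.
move=> i2 j2 /order_isE[k_gt0 wk1 w_min].
have [[ii _] [jj _]] := (proj1 (order2P i) i2, proj1 (order2P j) j2).
set w := i * j.
have iw n : i * w ^+ n = w ^- n * i.
  have wi : w ^ i = w^-1.
    by rewrite /w conjgE invgM (mulg1_eq ii) (mulg1_eq jj) !mulgA ii mul1g.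
  by rewrite -expVgn -wi -conjXg conjgE (mulg1_eq ii) -!mulgA ii mulg1.
(* For odd k the power w^((k+1)/2) conjugates i to j; for even k the
   involution w^(k/2) centralizes both i and j, so i = j by uniqueness. *)
have [m [k_eq|k_eq]] : exists m, k = m.*2.+1 \/ k = m.*2.
  by exists k./2; case: odd (odd_double_half k) => e; rewrite -{1}e; [left|right].
- exists (w ^+ m.+1); rewrite conjgE iw mulgA -invgM -expgnDr addSn addnS addnn.
  rewrite -k_eq expgSr wk1 mul1g.
  by rewrite invgM (mulg1_eq ii) (mulg1_eq jj) -mulgA ii mulg1.
- set z := w ^+ m.
  have zz : z * z = 1 by rewrite -expgnDr addnn -k_eq.
  have m_gt0 : 0 < m by move: k_gt0; rewrite k_eq double_gt0.
  have z2 : ord z 2.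
    apply/order2P; split=> //; apply: w_min.
    by rewrite m_gt0 k_eq -addnn -{1}(add0n m) ltn_add2r.
  have zi : commute z i by rewrite /commute iw (mulg1_eq zz).
  have zj : commute z j.
    have -> : j = i * w by rewrite /w mulgA ii mul1g.
    exact/(commuteM zi)/commute_sym/commuteX/commute_refl.
  exists 1; rewrite conjg1.
  rewrite (involution_commute_eq z2 i2 (commute_sym zi)).
  by rewrite (involution_commute_eq z2 j2 (commute_sym zj)).
Qed.

Hypothesis periodic_gT : periodic *%g (1 : gT).
Local Notation Theta t := (conj_class *%g monoid.inv t).

Theorem order4_conj_class_partition t : ord t 4 ->
  (forall x, ~ (Theta t x /\ inv_set monoid.inv (Theta t) x)) /\
  (forall x, (Theta t x \/ inv_set monoid.inv (Theta t) x) <-> ord x 4).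
Proof.
move=> t4; set i := t * t.
have i2 : ord i 2 := order4_sqr t4.
have [ii i_n1] := proj1 (order2P i) i2.
have ti : commute t i by apply/commuteM/commute_refl; apply: commute_refl.
split.
  move=> x [/conj_classP[g ->] [_ [/conj_classP[h ->] tg_th]]].
  have ts : t ^ (g / h) = t^-1 by rewrite conjgM tg_th -conjVg conjgK.
  have si : commute (g / h) i.
    apply/commute_sym/commgP/conjg_fixP.
    by rewrite /i conjMg ts -invgM; apply: mulg1_eq.
  have st : t ^ (g / h) = t.
    exact/conjg_fixP/commgP/(centralizer_involution_commute i2 ti si).
  by move: i_n1; rewrite /i -{2}st ts mulgV eqxx.
move=> x; split.
  case=> [/conj_classP[g ->]|[_ [/conj_classP[g ->] ->]]]; first exact: order_conj.
  exact/order_inv/order_conj.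
move=> x4; have x2 := order4_sqr x4.
have [k ik] := periodic_gT (i * (x * x)).
have [g ig] := involutions_conj i2 x2 ik.
set y := x ^ g^-1.
have yy : y * y = i by rewrite -conjMg -ig conjgK.
have yi : commute y i by rewrite /commute -yy mulgA.
have yt : commute y t := centralizer_involution_commute i2 yi ti.
have u_i : commute (y / t) i.
  apply/commute_sym/commuteM; first exact/commute_sym.
  exact/commuteV/commute_sym.
have uu : (y / t) * (y / t) = 1.
  by rewrite -expg2 expgnFl // expg2 yy expg2 mulgV.
have x_y : x = y ^ g by rewrite conjgKV.
have [u1|u_n1] := eqVneq (y / t) 1.
  by left; apply/conj_classP; exists g; rewrite x_y (divg1_eq u1).
right; exists (t ^ g); split; first by apply/conj_classP; exists g.
have u2 : ord (y / t) 2 by apply/order2P.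
have y_t : y = t^-1.
  rewrite -(mulgVK t y) (involution_commute_eq i2 u2 u_i) /i; apply/esym/mulg1_eq.
  by have [_ <- _] := proj1 (order_isE t 4) t4; rewrite !expgS expg0 mulg1 !mulgA.
by rewrite x_y y_t conjVg.
Qed.
End InvolutionCentralizers.

(* [groupType] requires a choice structure; a bare type only gets one
   classically. *)
Definition group_of (G : Type) (mul : G -> G -> G) (one : G) (inv : G -> G)
  of is_group mul one inv : Type := G.

Section GroupOf.
Variables (G : Type) (mul : G -> G -> G) (one : G) (inv : G -> G).
Hypothesis HG : is_group mul one inv.

Let mulA : associative mul. Proof. by case: HG. Qed.
Let mul1 : left_id one mul. Proof. by case: HG. Qed.
Let mulr1 : right_id one mul. Proof. by case: HG. Qed.
Let mulV : left_inverse one inv mul. Proof. by case: HG. Qed.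
Let mulrV : right_inverse one inv mul. Proof. by case: HG. Qed.

HB.instance Definition _ := gen_eqMixin (group_of HG).
HB.instance Definition _ := gen_choiceMixin (group_of HG).
HB.instance Definition _ :=
  isGroup.Build (group_of HG) mulA mul1 mulr1 mulV mulrV.
End GroupOf.

Theorem lemma5 (G : Type) (mul : G -> G -> G) (one : G) (inv : G -> G)
  (HG : is_group mul one inv)
  (Hper : periodic mul one)
  (Hprimes : forall p : nat, prime p ->
     ((exists (g : G) (n : nat), order_is mul one g n /\ (p %| n)%N) <->
      (p = 2 \/ p = 3)))
  (H49 : forall (g h : G) (m n : nat),
     order_is mul one g m -> (m <= 4)%N ->
     order_is mul one h n -> (n <= 4)%N ->
     exists k, order_is mul one (mul g h) k /\ (k <= 9)%N)
  (Hcent : forall i : G, order_is mul one i 2 ->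
     two_group mul one (centralizer mul i) /\
     locally_cyclic mul one inv (centralizer mul i))
  (t : G) (Ht : order_is mul one t 4) :
  (forall x, ~ (conj_class mul inv t x /\ inv_set inv (conj_class mul inv t) x)) /\
  (forall x, (conj_class mul inv t x \/ inv_set inv (conj_class mul inv t) x)
             <-> order_is mul one x 4).
Proof.
have lc i : order_is mul one i 2 -> locally_cyclic mul one inv (centralizer mul i).
  by move=> /Hcent[].
exact: (@order4_conj_class_partition (group_of HG) lc Hper t Ht).
Qed.
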